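(* Let $\oplus$ be a combinator. Then: (1) $\oplus$ satisfies ($\oplus$UB): $\min(\preceq_{1\oplus 2}, S) \subseteq \min(\preceq_1, S) \cup \min(\preceq_2, S)$ for all $S \subseteq W$ and all pairs in its domain, if and only if it satisfies ($\oplus$SPU+): for all $x,y,z \in W$, if $x \prec_1 y$ and $z \prec_2 y$ then $x \prec_{1\oplus 2} y$ or $z \prec_{1\oplus 2} y$. (2) $\oplus$ satisfies ($\oplus$LB): for all $S \subseteq W$, either $\min(\preceq_1, S) \subseteq \min(\preceq_{1\oplus 2}, S)$ or $\min(\preceq_2, S) \subseteq \min(\preceq_{1\oplus 2}, S)$, if and only if it satisfies ($\oplus$WPU+): for all $x,y,z \in W$, if $x \preceq_1 y$ and $z \preceq_2 y$ then $x \preceq_{1\oplus 2} y$ or $z \preceq_{1\oplus 2} y$. (All conditions are required for every pair $\langle \preceq_1, \preceq_2\rangle$ in the domain of $\oplus$.)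
   Context: $W$ is a finite nonempty set (of possible worlds). A tpo is a total preorder on $W$; for a tpo $\preceq$, $\prec$ is its strict part and $\sim$ its symmetric part. For $S \subseteq W$, $\min(\preceq, S) = \{x \in S : x \preceq y \text{ for all } y \in S\}$. A combinator is a function $\oplus$ taking pairs of tpos $\langle \preceq_1, \preceq_2\rangle$ (from its domain) to a tpo $\preceq_1 \oplus \preceq_2$, written $\preceq_{1\oplus 2}$, with strict part $\prec_{1\oplus 2}$. *)

From mathcomp Require Import all_boot.
Set Implicit Arguments. Unset Strict Implicit. Unset Printing Implicit Defensive.

Section Tpo.
Variable W : finType.

Definition tpo (le : rel W) : Prop :=
  (forall x y, le x y || le y x) /\ (forall x y z, le x y -> le y z -> le x z).

Definition strict (le : rel W) : rel W := fun x y => le x y && ~~ le y x.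

Definition minset (le : rel W) (S : {set W}) : {set W} :=
  [set x in S | [forall y in S, le x y]].

Definition combinator (dom : rel W -> rel W -> Prop)
    (comb : rel W -> rel W -> rel W) : Prop :=
  forall le1 le2, dom le1 le2 -> [/\ tpo le1, tpo le2 & tpo (comb le1 le2)].

Definition UB (dom : rel W -> rel W -> Prop) (comb : rel W -> rel W -> rel W) : Prop :=
  forall le1 le2, dom le1 le2 -> forall S : {set W},
    minset (comb le1 le2) S \subset minset le1 S :|: minset le2 S.

Definition SPU_plus (dom : rel W -> rel W -> Prop) (comb : rel W -> rel W -> rel W) : Prop :=
  forall le1 le2, dom le1 le2 -> forall x y z : W,
    strict le1 x y -> strict le2 z y ->
    strict (comb le1 le2) x y \/ strict (comb le1 le2) z y.

Definition LB (dom : rel W -> rel W -> Prop) (comb : rel W -> rel W -> rel W) : Prop :=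
  forall le1 le2, dom le1 le2 -> forall S : {set W},
    minset le1 S \subset minset (comb le1 le2) S \/
    minset le2 S \subset minset (comb le1 le2) S.

Definition WPU_plus (dom : rel W -> rel W -> Prop) (comb : rel W -> rel W -> rel W) : Prop :=
  forall le1 le2, dom le1 le2 -> forall x y z : W,
    le1 x y -> le2 z y -> comb le1 le2 x y \/ comb le1 le2 z y.
End Tpo.

(* Everything happens for one fixed pair of tpos.  To derive the pointwise
   conditions, take S = {x, y, z}: if y were not strictly above x or z in the
   combined order, y would be minimal there while being non-minimal for both
   inputs; dually, a minimal element of {x, y, z} for an input order can be
   chosen among x and z.  For the set conditions, a violation yields elements
   x, z of S strictly below (resp. minimal with respect to) the input orders
   while y is minimal for the combined order; the pointwise condition then
   puts x or z strictly (resp. weakly) below y in the combined order,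
   contradicting the minimality of y (resp. the non-minimality of x, z). *)

(* [finset] has its own [minset]; importing Defs last makes ours visible. *)
From mathcomp Require Import all_boot.
From Pilot Require Import Defs.

Set Implicit Arguments.
Unset Strict Implicit.
Unset Printing Implicit Defensive.

Section Minset.
Variables (W : finType) (le : rel W).

Lemma minset_mem (S : {set W}) x : x \in minset le S -> x \in S.
Proof. by rewrite inE => /andP[]. Qed.

Lemma minset_le (S : {set W}) x y : x \in minset le S -> y \in S -> le x y.
Proof. by rewrite inE => /andP[_ /forall_inP]; apply. Qed.

Lemma minset_nstrict (S : {set W}) x y :
  y \in minset le S -> x \in S -> ~~ strict le x y.
Proof. by move=> miny /(minset_le miny) yx; rewrite /strict yx andbF. Qed.

Hypothesis le_tpo : tpo le.

Lemma tpo_refl x : le x x.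
Proof. by case: le_tpo => tot _; move: (tot x x); rewrite orbb. Qed.

Lemma negb_strict x y : ~~ strict le x y = le y x.
Proof.
case: le_tpo => tot _; rewrite /strict negb_and negbK.
by case: (boolP (le x y)) => //= nxy; move: (tot x y); rewrite (negbTE nxy).
Qed.

Lemma minset_le_trans (S : {set W}) x y :
  x \in minset le S -> y \in S -> le y x -> y \in minset le S.
Proof.
case: le_tpo => _ tr; rewrite !inE => /andP[_ /forall_inP minx] yS yx.
by rewrite yS; apply/forall_inP => u /minx; apply: tr yx.
Qed.

Lemma notin_minset_strict (S : {set W}) y :
  y \in S -> y \notin minset le S -> exists2 x, x \in S & strict le x y.
Proof.
rewrite inE => -> /forall_inPn[x xS nyx]; exists x => //.
by rewrite -negb_strict negbK in nyx.
Qed.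

Lemma minset_nonempty (S : {set W}) x0 : x0 \in S -> exists y, y \in minset le S.
Proof.
(* A minimal element is one with the smallest down-set. *)
move=> x0S; case: (arg_minnP (fun y => #|[set v | le v y]|) x0S) => y yS miny.
exists y; rewrite inE; apply/andP; split=> //; apply/forall_inP => u uS.
rewrite -negb_strict; apply/negP => /andP[uy nyu].
have : [set v | le v u] \proper [set v | le v y].
  apply/properP; split; last by exists y; rewrite !inE ?tpo_refl.
  by apply/subsetP => v; rewrite !inE => vu; case: le_tpo => _ tr; apply: tr vu uy.
by move/proper_card; rewrite ltnNge miny.
Qed.

Lemma minset_setU1 (A : {set W}) y :
  (y \in minset le (y |: A)) = [forall a in A, le y a].
Proof.
rewrite !inE eqxx /=; apply/forall_inP/forall_inP => leyA a aA.
  by apply: leyA; rewrite !inE aA orbT.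
by move: aA; rewrite !inE => /orP[/eqP->|/leyA]; rewrite ?tpo_refl.
Qed.

Lemma minset_setU1_meet (A : {set W}) a y :
  a \in A -> le a y -> exists2 m, m \in minset le (y |: A) & m \in A.
Proof.
move=> aA ay.
have [m minm] := minset_nonempty (setU11 y A).
have := minset_mem minm; rewrite !inE => /orP[/eqP eqmy|mA]; last by exists m.
by exists a => //; apply: minset_le_trans minm _ _; rewrite ?inE ?aA ?orbT ?eqmy.
Qed.

End Minset.

Section PairConditions.
Variables (W : finType) (le1 le2 le : rel W).

Definition ub_pair := forall S : {set W},
  minset le S \subset minset le1 S :|: minset le2 S.

Definition spu_pair := forall x y z : W,
  strict le1 x y -> strict le2 z y -> strict le x y \/ strict le z y.

Definition lb_pair := forall S : {set W},
  minset le1 S \subset minset le S \/ minset le2 S \subset minset le S.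

Definition wpu_pair := forall x y z : W,
  le1 x y -> le2 z y -> le x y \/ le z y.

Lemma ub_spu_pair : tpo le -> ub_pair -> spu_pair.
Proof.
move=> tpo_le ub x y z xy zy.
case: (boolP (strict le x y)) => [|yx]; first by left.
case: (boolP (strict le z y)) => [|yz]; first by right.
have : y \in minset le (y |: [set x; z]).
  rewrite (minset_setU1 tpo_le); apply/forall_inP => a.
  by rewrite !inE -(negb_strict tpo_le) => /orP[]/eqP->.
move/(subsetP (ub _)); rewrite inE => /orP[] /minset_nstrict miny.
  by have := miny x; rewrite xy !inE eqxx orbT => /(_ isT).
by have := miny z; rewrite zy !inE eqxx !orbT => /(_ isT).
Qed.

Lemma spu_ub_pair : tpo le1 -> tpo le2 -> spu_pair -> ub_pair.
Proof.
move=> tpo1 tpo2 spu S; apply/subsetP => y miny; have yS := minset_mem miny.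
rewrite inE; apply/negPn/negP; rewrite negb_or => /andP[].
move=> /(notin_minset_strict tpo1 yS)[x xS xy] /(notin_minset_strict tpo2 yS)[z zS zy].
case: (spu x y z xy zy) => lt.
  by have := minset_nstrict miny xS; rewrite lt.
by have := minset_nstrict miny zS; rewrite lt.
Qed.

Lemma lb_wpu_pair : tpo le1 -> tpo le2 -> lb_pair -> wpu_pair.
Proof.
move=> tpo1 tpo2 lb x y z xy zy.
case: (boolP (le x y)) => [|nxy]; first by left.
case: (boolP (le z y)) => [|nzy]; first by right.
have notin_min m : m \in [set x; z] -> m \in minset le (y |: [set x; z]) -> False.
  move=> mA /minset_le/(_ (setU11 _ _)); move: mA.
  by rewrite !inE => /orP[]/eqP->; apply/negP.
have [m1 min1 m1A] := minset_setU1_meet tpo1 (set21 x z) xy.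
have [m2 min2 m2A] := minset_setU1_meet tpo2 (set22 x z) zy.
case: (lb (y |: [set x; z])) => /subsetP sub.
  by case: (notin_min _ m1A (sub _ min1)).
by case: (notin_min _ m2A (sub _ min2)).
Qed.

Lemma wpu_lb_pair : tpo le -> wpu_pair -> lb_pair.
Proof.
move=> tpo_le wpu S.
case: (boolP (minset le1 S \subset minset le S)) => [|/subsetPn[x min1x nminx]];
  first by left.
case: (boolP (minset le2 S \subset minset le S)) => [|/subsetPn[z min2z nminz]];
  first by right.
have [y miny] := minset_nonempty tpo_le (minset_mem min1x).
have yS := minset_mem miny.
case: (wpu x y z (minset_le min1x yS) (minset_le min2z yS)) => [xy|zy].
  by case/negP: nminx; apply: minset_le_trans miny (minset_mem min1x) xy.
by case/negP: nminz; apply: minset_le_trans miny (minset_mem min2z) zy.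
Qed.

End PairConditions.

Theorem proposition3 (W : finType) (w0 : W)
    (dom : rel W -> rel W -> Prop) (comb : rel W -> rel W -> rel W) :
  combinator dom comb ->
  (UB dom comb <-> SPU_plus dom comb) /\ (LB dom comb <-> WPU_plus dom comb).
Proof.
move=> comb_tpo; split; split=> H le1 le2 D; have [tpo1 tpo2 tpo12] := comb_tpo _ _ D.
- exact: ub_spu_pair tpo12 (H _ _ D).
- exact: spu_ub_pair tpo1 tpo2 (H _ _ D).
- exact: lb_wpu_pair tpo1 tpo2 (H _ _ D).
- exact: wpu_lb_pair tpo12 (H _ _ D).
Qed.
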